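(* Let $x(t)=(x_1(t),x_2(t))$ solve $\dot x=f(x)$ and $x^u(t)$ solve $\dot x^u=h(x^u)$ on $t\ge0$, where $$f(x_1,x_2)=\begin{bmatrix}-Dx_1+\gamma DP\big(M(x_2+Q^* )-M(Q^* )\big)\\ \beta Dx_1-\beta Dx_2\end{bmatrix},\qquad h(x_1,x_2)=\begin{bmatrix}-Dx_1+\gamma DPM(x_2)\\ \beta Dx_1-\beta Dx_2\end{bmatrix}.$$ If $x^u(0)>x(0)$ elementwise, then $x^u(t)\ge x(t)$ elementwise for all $t\ge0$.
   Context: Finite MDP with states $\mathcal S$, actions $\mathcal A$, kernel $P$, expected reward $R$, discount $\gamma\in[0,1)$; $\beta>0$; $n=|\mathcal S||\mathcal A|$. $D$ is the diagonal matrix of a probability distribution $d>0$ on $\mathcal S\times\mathcal A$; $P$ is the $n\times|\mathcal S|$ matrix with row $(s,a)$ equal to $P(\cdot\mid s,a)$; $M(Q)(s)=\max_aQ(s,a)$; $Q^*=R+\gamma PM(Q^* )$. (Both vector fields are globally Lipschitz, so solutions exist and are unique.) *)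

From HB Require Import structures.
From mathcomp Require Import all_boot all_order all_algebra.
From mathcomp Require Import all_classical all_reals all_analysis.
Set Implicit Arguments. Unset Strict Implicit. Unset Printing Implicit Defensive.
Import Order.TTheory GRing.Theory Num.Theory.
Import numFieldNormedType.Exports.
Local Open Scope classical_set_scope.
Local Open Scope ring_scope.

(* M(Q)(s) = max_a Q(s,a).  The action set is nonempty (witness a0); the value
   does not depend on a0. *)
Definition Mop (R : realType) (S A : finType) (a0 : A) (Q : S * A -> R) : S -> R :=
  fun s => \big[Num.max/Q (s, a0)]_(a : A) Q (s, a).

Definition Pop (R : realType) (S A : finType) (P : S * A -> S -> R) (v : S -> R)
  : S * A -> R := fun i => \sum_(s' : S) P i s' * v s'.

Definition f1 (R : realType) (S A : finType) (a0 : A) (d : S * A -> R)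
  (P : S * A -> S -> R) (gamma : R) (Qstar : S * A -> R)
  (x1 x2 : S * A -> R) : S * A -> R :=
  fun i => - (d i * x1 i)
    + gamma * (d i * Pop P (fun s => Mop a0 (fun j => x2 j + Qstar j) s
                                   - Mop a0 Qstar s) i).

Definition h1 (R : realType) (S A : finType) (a0 : A) (d : S * A -> R)
  (P : S * A -> S -> R) (gamma : R) (x1 x2 : S * A -> R) : S * A -> R :=
  fun i => - (d i * x1 i) + gamma * (d i * Pop P (Mop a0 x2) i).

Definition g2 (R : realType) (S A : finType) (d : S * A -> R) (beta : R)
  (x1 x2 : S * A -> R) : S * A -> R :=
  fun i => beta * (d i * x1 i) - beta * (d i * x2 i).

Definition solves_on_nonneg (R : realType) (I : Type) (y : R -> I -> R)
  (F : R -> I -> R) : Prop :=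
  (forall i : I, (fun t : R => y t i) @ at_right (0 : R) --> y 0 i) /\
  (forall t : R, 0 < t -> forall i : I,
     is_derive t (1 : R) (fun s : R => y s i) (F t i)).

From HB Require Import structures.
From mathcomp Require Import all_boot all_order all_algebra.
From mathcomp Require Import all_classical all_reals all_analysis.
From mathcomp Require Import ring lra.
Set Implicit Arguments. Unset Strict Implicit. Unset Printing Implicit Defensive.
Import Order.TTheory GRing.Theory Num.Theory.
Import numFieldNormedType.Exports.
Local Open Scope classical_set_scope.
Local Open Scope ring_scope.

(* Set e := x^u - x.  While x2 <= xu2, monotonicity and subadditivity of M give
   M(x2 + Qstar) - M(Qstar) <= M(xu2), hence e1' >= -D e1; while x1 <= xu1,
   e2' >= -beta D e2.  Along such an interval every coordinate of e, weighted by
   an exponential, is nondecreasing, so the strict positivity of e(0) cannot be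
   lost: at the supremum of the times up to which e > 0, e is still positive,
   and by continuity it stays positive a little longer. *)

Lemma is_derive_continuous (R : realType) (u : R -> R) (t du : R) :
  is_derive t 1 u du -> {for t, continuous u}.
Proof. by move=> [dv _]; apply/differentiable_continuous/derivable1_diffP. Qed.

Lemma near_at_right_interval (R : realType) (tau : R) (Q : R -> Prop) :
  (\forall s \near tau^'+, Q s) ->
  exists2 r : R, 0 < r & forall s, tau < s < tau + r -> Q s.
Proof.
rewrite /at_right near_withinE => /nbhs_ballP [r /= r0 Hr].
exists r => // s /andP[ts tsr]; apply: Hr => //.
by rewrite /ball /= ltr_norml; apply/andP; split; lra.
Qed.

(* (expR (c t) * u t)' = expR (c t) * (u' t + c u t) >= 0, so this product
   is nondecreasing on [0, tau]. *)
Lemma gronwall_gt0 (R : realType) (u du : R -> R) (c tau : R) :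
  0 < tau -> 0 < u 0 -> u @ 0^'+ --> u 0 ->
  (forall t, 0 < t <= tau -> is_derive t 1 u (du t)) ->
  (forall t, 0 < t < tau -> - (c * u t) <= du t) -> 0 < u tau.
Proof.
move=> tau0 u0 u0c ud udge.
pose g s := expR (c * s) * u s.
have dexp (t : R) : is_derive t (1 : R) (fun s => expR (c * s)) (c * expR (c * t)).
  have dlin : is_derive t 1 (fun s : R => c * s) c.
    have := @is_deriveZ R R R id c t 1 1 (is_derive_id _ _).
    by rewrite /GRing.scale /= mulr1.
  by rewrite mulrC; apply: (@is_derive1_comp R expR (fun s => c * s)).
have dg (t : R) : 0 < t <= tau ->
    is_derive t (1 : R) g (expR (c * t) * du t + u t * (c * expR (c * t))).
  by move=> /ud udt; have := is_deriveM (dexp t) udt.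
have gc : {within `[0, tau], continuous g}.
  apply/continuous_within_itvP => //; split.
  - move=> x; rewrite in_itv /= => /andP[x0 xt].
    by apply: is_derive_continuous (dg x _); rewrite x0 ltW.
  - apply: cvgM; last exact: u0c.
    apply: cvg_at_right_filter; apply: continuous_comp; last exact: continuous_expR.
    exact: mulrl_continuous.
  - by apply: cvg_at_left_filter; apply: is_derive_continuous (dg tau _); rewrite tau0 lexx.
have dg' x : x \in `]0, tau[ ->
    is_derive x (1 : R) g (expR (c * x) * du x + u x * (c * expR (c * x))).
  by rewrite in_itv /= => /andP[x0 xt]; apply: dg; rewrite x0 ltW.
have [x] := MVT tau0 dg' gc.
rewrite in_itv /= => /andP[x0 xt] gtau.
have : g 0 <= g tau.
  rewrite -subr_ge0 gtau subr0; apply: mulr_ge0; last exact: ltW.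
  have -> : expR (c * x) * du x + u x * (c * expR (c * x))
          = expR (c * x) * (du x - - (c * u x)) by ring.
  by rewrite mulr_ge0 ?expR_ge0 // subr_ge0 udge // x0 xt.
rewrite /g mulr0 expR0 mul1r => /(lt_le_trans u0).
by rewrite pmulr_rgt0 // expR_gt0.
Qed.

Lemma nonneg_continuous_induction (R : realType) (Q : R -> Prop) :
  (forall tau, 0 <= tau -> (forall s, 0 <= s < tau -> Q s) ->
     Q tau /\ \forall s \near tau^'+, Q s) ->
  forall t, 0 <= t -> Q t.
Proof.
move=> step t0 t00; apply: contrapT => Qt0.
pose G := [set t : R | 0 <= t /\ forall s, 0 <= s <= t -> Q s].
have G0 : G 0.
  split=> // s /andP[s0 s0'].
  have -> : s = 0 by apply/le_anti; rewrite s0 s0'.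
  have none s' : 0 <= s' < 0 -> Q s' by case/andP=> /le_lt_trans h /h; rewrite ltxx.
  exact: (step 0 (lexx 0) none).1.
have G_ub : ubound G t0.
  move=> t [_ Qt]; rewrite leNgt; apply/negP => t0t.
  by apply: Qt0; apply: Qt; rewrite t00 ltW.
have supG : has_sup G by split; [exists 0 | exists t0].
pose tau := sup G.
have tau0 : 0 <= tau := sup_upper_bound supG G0.
have Q_below s : 0 <= s < tau -> Q s.
  move=> /andP[s0 stau].
  have gap : 0 < tau - s by rewrite subr_gt0.
  have [g [_ Qg] sg] := sup_adherent gap supG.
  by apply: Qg; rewrite s0 /=; rewrite /tau in sg; lra.
have [Qtau /near_at_right_interval [r r0 Qr]] := step tau tau0 Q_below.
have : G (tau + r / 2).
  split; first lra.
  move=> s /andP[s0 sr]; case: (ltgtP s tau) => [stau|taus|->] //.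
  - by apply: Q_below; rewrite s0 stau.
  - by apply: Qr; rewrite taus /=; lra.
by move=> /(sup_upper_bound supG); rewrite -/tau; lra.
Qed.

Lemma quasimonotone_pos_invariant (R : realType) (I : finType)
    (e de : R -> I -> R) (c : I -> R) :
  (forall i, 0 < e 0 i) ->
  (forall i, (fun t => e t i) @ 0^'+ --> e 0 i) ->
  (forall t : R, 0 < t -> forall i, is_derive t (1 : R) (fun s => e s i) (de t i)) ->
  (forall t : R, 0 < t -> (forall j, 0 <= e t j) -> forall i, - (c i * e t i) <= de t i) ->
  forall t, 0 <= t -> forall i, 0 < e t i.
Proof.
move=> e0 e0c ed ede; apply: nonneg_continuous_induction => tau tau0 e_below.
have [->|tau_neq0] := eqVneq tau 0.
  split=> //; apply: filter_forall => i.
  exact: cvgr_gt (e0c i) 0 (e0 i).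
have taup : 0 < tau by rewrite lt_neqAle eq_sym tau_neq0.
have etau i : 0 < e tau i.
  apply: (@gronwall_gt0 R _ _ (c i) _ taup (e0 i) (e0c i)).
    by move=> t /andP[t0 _]; apply: ed.
  move=> t /andP[t0 ttau]; apply: ede => // j.
  by apply/ltW/e_below; rewrite ttau ltW.
split=> //; apply: filter_forall => i; apply: cvgr_gt (etau i).
by apply: cvg_at_right_filter; apply: is_derive_continuous (ed tau taup i).
Qed.

Section MaxAndTransition.
Variables (R : realType) (S A : finType) (a0 : A).

Lemma le_Mop (Q : S * A -> R) s a : Q (s, a) <= Mop a0 Q s.
Proof. by rewrite /Mop (bigD1 a) //= le_max lexx. Qed.

Lemma Mop_le (Q : S * A -> R) s b : (forall a, Q (s, a) <= b) -> Mop a0 Q s <= b.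
Proof.
move=> Qb; apply: (big_ind (fun x => x <= b)) => // x y xb yb.
by rewrite ge_max xb yb.
Qed.

Lemma Mop_subadditive (v w : S * A -> R) s :
  Mop a0 (fun j => v j + w j) s <= Mop a0 v s + Mop a0 w s.
Proof. by apply: Mop_le => a; apply: lerD; apply: le_Mop. Qed.

Lemma ler_Mop (v w : S * A -> R) s :
  (forall j, v j <= w j) -> Mop a0 v s <= Mop a0 w s.
Proof.
by move=> vw; apply: Mop_le => a; apply: le_trans (vw (s, a)) _; apply: le_Mop.
Qed.

Lemma ler_Pop (P : S * A -> S -> R) (v w : S -> R) i :
  (forall s', 0 <= P i s') -> (forall s, v s <= w s) -> Pop P v i <= Pop P w i.
Proof. by move=> P0 vw; apply: ler_sum => s _; apply: ler_wpM2l. Qed.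

End MaxAndTransition.

Lemma h1_f1_comparison (R : realType) (S A : finType) (a0 : A) (d : S * A -> R)
    (P : S * A -> S -> R) (gamma : R) (Qstar x1 x2 y1 y2 : S * A -> R) i :
  (forall s', 0 <= P i s') -> 0 <= gamma -> 0 <= d i ->
  (forall j, x2 j <= y2 j) ->
  - (d i * (y1 i - x1 i)) <= h1 a0 d P gamma y1 y2 i - f1 a0 d P gamma Qstar x1 x2 i.
Proof.
move=> P0 gamma0 di0 x2y2.
have shift_le : Pop P (fun s => Mop a0 (fun j => x2 j + Qstar j) s - Mop a0 Qstar s) i
                <= Pop P (Mop a0 y2) i.
  apply: ler_Pop => // s; rewrite lerBlDr.
  by apply: le_trans (Mop_subadditive a0 x2 Qstar s) _; rewrite lerD2r ler_Mop.
rewrite /h1 /f1 -subr_ge0.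
set b := Pop P _ i in shift_le *; set a := Pop P _ i in shift_le *.
have -> : - (d i * y1 i) + gamma * (d i * a) - (- (d i * x1 i) + gamma * (d i * b))
          - - (d i * (y1 i - x1 i)) = gamma * d i * (a - b) by ring.
by rewrite !mulr_ge0 // subr_ge0.
Qed.

Lemma g2_comparison (R : realType) (S A : finType) (d : S * A -> R) (beta : R)
    (x1 x2 y1 y2 : S * A -> R) i :
  0 <= beta -> 0 <= d i -> x1 i <= y1 i ->
  - (beta * d i * (y2 i - x2 i)) <= g2 d beta y1 y2 i - g2 d beta x1 x2 i.
Proof.
move=> beta0 di0 x1y1; rewrite /g2 -subr_ge0.
have -> : beta * (d i * y1 i) - beta * (d i * y2 i)
          - (beta * (d i * x1 i) - beta * (d i * x2 i))
          - - (beta * d i * (y2 i - x2 i)) = beta * d i * (y1 i - x1 i) by ring.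
by rewrite !mulr_ge0 // subr_ge0.
Qed.

Theorem mainTheorem9 (R : realType) (S A : finType) (a0 : A)
  (P : S * A -> S -> R) (Rew : S * A -> R) (gamma beta : R)
  (d : S * A -> R) (Qstar : S * A -> R)
  (x1 x2 xu1 xu2 : R -> S * A -> R) :
  (forall i s', 0 <= P i s') -> (forall i, \sum_(s' : S) P i s' = 1) ->
  0 <= gamma -> gamma < 1 -> 0 < beta ->
  (forall i, 0 < d i) -> \sum_(i : S * A) d i = 1 ->
  (forall i, Qstar i = Rew i + gamma * Pop P (Mop a0 Qstar) i) ->
  solves_on_nonneg x1 (fun t => f1 a0 d P gamma Qstar (x1 t) (x2 t)) ->
  solves_on_nonneg x2 (fun t => g2 d beta (x1 t) (x2 t)) ->
  solves_on_nonneg xu1 (fun t => h1 a0 d P gamma (xu1 t) (xu2 t)) ->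
  solves_on_nonneg xu2 (fun t => g2 d beta (xu1 t) (xu2 t)) ->
  (forall i, x1 0 i < xu1 0 i) -> (forall i, x2 0 i < xu2 0 i) ->
  forall t, 0 <= t -> forall i, x1 t i <= xu1 t i /\ x2 t i <= xu2 t i.
Proof.
move=> P0 _ gamma0 _ beta0 d0 _ _ [x1c x1d] [x2c x2d] [u1c u1d] [u2c u2d] init1 init2.
pose e t (k : (S * A) + (S * A)) :=
  match k with inl i => xu1 t i - x1 t i | inr i => xu2 t i - x2 t i end.
pose de t (k : (S * A) + (S * A)) :=
  match k with
  | inl i => h1 a0 d P gamma (xu1 t) (xu2 t) i - f1 a0 d P gamma Qstar (x1 t) (x2 t) i
  | inr i => g2 d beta (xu1 t) (xu2 t) i - g2 d beta (x1 t) (x2 t) i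
  end.
pose c (k : (S * A) + (S * A)) := match k with inl i => d i | inr i => beta * d i end.
have e_pos : forall t, 0 <= t -> forall k, 0 < e t k.
  apply: (@quasimonotone_pos_invariant R _ e de c).
  - by case=> i /=; rewrite subr_gt0.
  - by case=> i; apply: cvgB.
  - by move=> t t0 [] i; apply: is_deriveB; [apply: u1d | apply: x1d | apply: u2d | apply: x2d].
  - move=> t _ e_ge0 [] i /=.
    + apply: h1_f1_comparison => // [|j]; first exact: ltW.
      by rewrite -subr_ge0; apply: (e_ge0 (inr j)).
    + apply: g2_comparison; [exact: ltW | exact: ltW |].
      by rewrite -subr_ge0; apply: (e_ge0 (inl i)).
move=> t t0 i; have := e_pos t t0 (inl i); have := e_pos t t0 (inr i).
by rewrite /= !subr_gt0 => /ltW ? /ltW.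
Qed.
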